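(* Let ${\bf x}_1,\dots,{\bf x}_N\in\mathbb{C}^d$ be samples such that the sample covariance $\widehat{\bf C}=\frac1N\sum_{n=1}^N{\bf x}_n{\bf x}_n^H$ is invertible, and write $\hat{\rm E}[g({\bf x})]=\frac1N\sum_{n=1}^N g({\bf x}_n)$. Let $\phi:\mathbb{C}\to\mathbb{C}$ be any function and ${\bf w}\in\mathbb{C}^d\setminus\{{\bf 0}\}$. Put $\hat s_n={\bf w}^H{\bf x}_n$, $\hat\sigma=\sqrt{{\bf w}^H\widehat{\bf C}{\bf w}}$, ${\bf a}=\widehat{\bf C}{\bf w}/\hat\sigma^2$, $$\hat\nu=\hat{\rm E}\Big[\phi\Big(\frac{\hat s}{\hat\sigma}\Big)\frac{\hat s}{\hat\sigma}\Big],\qquad \nabla={\bf a}-\hat\nu^{-1}\hat{\rm E}\Big[\phi\Big(\frac{\hat s}{\hat\sigma}\Big)\frac{{\bf x}}{\hat\sigma}\Big],$$ and assume $\hat\nu\ne 0$. Then for every real $\lambda\neq1$ the matrix $\frac{\widehat{\bf C}}{\hat\sigma^2}-\lambda{\bf a}{\bf a}^H$ is invertible and $$\lim_{\lambda\to1}\Big(\frac{\widehat{\bf C}}{\hat\sigma^2}-\lambda{\bf a}{\bf a}^H\Big)^{-1}\nabla=\hat\sigma^2\,\widehat{\bf C}^{-1}\nabla.$$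
   Context: Here $\hat s=\hat s({\bf x})={\bf w}^H{\bf x}$ inside $\hat{\rm E}$. The vector ${\bf a}$ is the mixing vector linked to the separating vector ${\bf w}$ through the orthogonal constraint, and $\nabla$ is the normalized gradient used in one-unit FastDIVA; the matrix $\frac{\widehat{\bf C}}{\hat\sigma^2}-{\bf a}{\bf a}^H$ (the case $\lambda=1$) is rank deficient. *)

From HB Require Import structures.
From mathcomp Require Import all_boot all_order all_algebra.
From mathcomp Require Import all_classical all_reals all_analysis.
From mathcomp Require Import complex.
Set Implicit Arguments. Unset Strict Implicit. Unset Printing Implicit Defensive.
Import Order.TTheory GRing.Theory Num.Theory.
Import numFieldNormedType.Exports numFieldTopology.Exports.
Local Open Scope ring_scope.
Local Open Scope classical_set_scope.

Definition ctr (R : rcfType) m n (A : 'M[R[i]]_(m, n)) : 'M[R[i]]_(n, m) :=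
  (map_mx Num.conj A)^T.

Definition sample_cov (R : rcfType) (d N : nat) (x : 'I_N -> 'cV[R[i]]_d)
  : 'M[R[i]]_d :=
  (N%:R)^-1 *: \sum_(n < N) (x n *m ctr (x n)).

Definition Ehat (R : rcfType) (N : nat) p q (g : 'I_N -> 'M[R[i]]_(p, q))
  : 'M[R[i]]_(p, q) :=
  (N%:R)^-1 *: \sum_(n < N) g n.

Definition shat (R : rcfType) d N (w : 'cV[R[i]]_d) (x : 'I_N -> 'cV[R[i]]_d)
  (n : 'I_N) : R[i] := (ctr w *m x n) 0 0.

Definition sigmahat (R : rcfType) d N (w : 'cV[R[i]]_d) (x : 'I_N -> 'cV[R[i]]_d)
  : R[i] := sqrtC ((ctr w *m sample_cov x *m w) 0 0).

Definition avec (R : rcfType) d N (w : 'cV[R[i]]_d) (x : 'I_N -> 'cV[R[i]]_d)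
  : 'cV[R[i]]_d := (sigmahat w x ^+ 2)^-1 *: (sample_cov x *m w).

Definition nuhat (R : rcfType) d N (phi : R[i] -> R[i]) (w : 'cV[R[i]]_d)
  (x : 'I_N -> 'cV[R[i]]_d) : R[i] :=
  (N%:R)^-1 * \sum_(n < N)
     (phi (shat w x n / sigmahat w x) * (shat w x n / sigmahat w x)).

Definition gradhat (R : rcfType) d N (phi : R[i] -> R[i]) (w : 'cV[R[i]]_d)
  (x : 'I_N -> 'cV[R[i]]_d) : 'cV[R[i]]_d :=
  avec w x - (nuhat phi w x)^-1 *:
    Ehat (fun n => phi (shat w x n / sigmahat w x) *: ((sigmahat w x)^-1 *: x n)).

Definition Mlam (R : rcfType) d N (w : 'cV[R[i]]_d) (x : 'I_N -> 'cV[R[i]]_d)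
  (lam : R) : 'M[R[i]]_d :=
  (sigmahat w x ^+ 2)^-1 *: sample_cov x - (lam%:C)%C *: (avec w x *m ctr (avec w x)).

(* Convergence of a C^d-valued function of a real variable lam as lam -> 1,
   lam <> 1 (deleted neighbourhood), for the standard (norm) topology on
   C^d: R[i]^o is R[i] equipped with the topology induced by the complex
   modulus, and column vectors carry the product (max-norm) topology. *)
Definition cvg_to_at1 (R : realType) d (f : R -> 'cV[R[i]]_d) (L : 'cV[R[i]]_d)
  : Prop :=
  (fun lam : R => (f lam : 'cV[R[i]^o]_d)) @ (1 : R)^' --> (L : 'cV[R[i]^o]_d).

From HB Require Import structures.
From mathcomp Require Import all_boot all_order all_algebra.
From mathcomp Require Import all_classical all_reals all_analysis.
From mathcomp Require Import complex ring.
Set Implicit Arguments. Unset Strict Implicit. Unset Printing Implicit Defensive.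
Import Order.TTheory GRing.Theory Num.Theory.
Local Open Scope ring_scope.

(* With q = w^H C w = sigma^2 and a = C w / q, the matrix C / q - lambda a a^H is
   a rank-one downdate of C / q, and the Sherman-Morrison formula gives its
   inverse as q C^-1 + lambda / (1 - lambda) w w^H whenever lambda <> 1.
   Since w^H a = 1 and w^H E^[phi(s/sigma) x / sigma] = nu, the gradient is
   orthogonal to w, so the rank-one term annihilates it: the vector whose limit
   is taken is the constant q C^-1 nabla for all lambda <> 1. *)

Section ShermanMorrison.
Variables (F : fieldType) (n : nat) (C : 'M[F]_n) (w : 'cV[F]_n) (h : 'rV[F]_n) (q : F).
Hypotheses (C_unit : C \in unitmx) (hCw : h *m C *m w = q%:M) (q_neq0 : q != 0).

Let a := q^-1 *: (C *m w).
Let b := q^-1 *: (h *m C).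

Lemma mulmx_rank1_downdate_inv l : l != 1 ->
  (q^-1 *: C - l *: (a *m b)) *m (q *: invmx C + (l / (1 - l)) *: (w *m h)) = 1%:M.
Proof.
move=> l_neq1; have l1_neq0 : 1 - l != 0 by rewrite subr_eq0 eq_sym.
rewrite mulmxDr !mulmxBl -!scalemxAl -!scalemxAr !scalerA -!scalemxAl !scalerA.
rewrite -!mulmxA mulmxV // mulmx1 (mulmxA h C) (mulmxA (h *m C) w) hCw.
rewrite mul_scalar_mx -!scalemxAr !scalerA mulVf // scale1r.
rewrite -scalerBl -addrA -scaleNr -scalerDl.
suff -> : - (l / q * q / q) + (q^-1 * (l / (1 - l)) - l / q * (l / (1 - l)) / q * q) = 0.
  by rewrite scale0r addr0.
by field; rewrite q_neq0 l1_neq0.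
Qed.

Lemma rank1_downdate_unit l : l != 1 -> q^-1 *: C - l *: (a *m b) \in unitmx.
Proof. by move=> l_neq1; case: (mulmx1_unit (mulmx_rank1_downdate_inv l_neq1)). Qed.

Lemma invmx_rank1_downdate_mul_orth l (g : 'cV[F]_n) : l != 1 -> h *m g = 0 ->
  invmx (q^-1 *: C - l *: (a *m b)) *m g = q *: (invmx C *m g).
Proof.
move=> l_neq1 hg; set M := _ - _.
have -> : invmx M = q *: invmx C + (l / (1 - l)) *: (w *m h).
  rewrite -[RHS](mulKmx (rank1_downdate_unit l_neq1)).
  by rewrite mulmx_rank1_downdate_inv // mulmx1.
by rewrite mulmxDl -!scalemxAl -mulmxA hg mulmx0 scaler0 addr0.
Qed.

End ShermanMorrison.

Section ConjugateTranspose.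
Variable R : rcfType.

Lemma ctrE m n (A : 'M[R[i]]_(m, n)) i j : ctr A i j = (A j i)^*.
Proof. by rewrite /ctr !mxE. Qed.

Lemma ctrM m n p (A : 'M[R[i]]_(m, n)) (B : 'M[R[i]]_(n, p)) :
  ctr (A *m B) = ctr B *m ctr A.
Proof. by rewrite /ctr map_mxM trmx_mul. Qed.

Lemma ctrK m n (A : 'M[R[i]]_(m, n)) : ctr (ctr A) = A.
Proof. by apply/matrixP => i j; rewrite !ctrE conjCK. Qed.

Lemma ctrZ m n c (A : 'M[R[i]]_(m, n)) : ctr (c *: A) = c^* *: ctr A.
Proof. by apply/matrixP => i j; rewrite !(ctrE, mxE) rmorphM. Qed.

Lemma ctrD m n (A B : 'M[R[i]]_(m, n)) : ctr (A + B) = ctr A + ctr B.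
Proof. by apply/matrixP => i j; rewrite !(ctrE, mxE) rmorphD. Qed.

Lemma ctr0 m n : ctr (0 : 'M[R[i]]_(m, n)) = 0.
Proof. by apply/matrixP => i j; rewrite !(ctrE, mxE) rmorph0. Qed.

Lemma ctr_sample_cov d N (x : 'I_N -> 'cV[R[i]]_d) : ctr (sample_cov x) = sample_cov x.
Proof.
rewrite /sample_cov ctrZ fmorphV rmorph_nat (big_morph _ (@ctrD _ _) (@ctr0 _ _)).
by congr (_ *: _); apply: eq_bigr => n _; rewrite ctrM ctrK.
Qed.

End ConjugateTranspose.

Section SampleQuadraticForm.
Variables (R : rcfType) (d N : nat) (x : 'I_N -> 'cV[R[i]]_d) (w : 'cV[R[i]]_d).
Let C := sample_cov x.
Let q := (ctr w *m C *m w) 0 0.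

Lemma ctr_sample_mul_shat n : ctr (x n) *m w = (shat w x n)^*%:M.
Proof. by rewrite -[w in LHS]ctrK -ctrM [LHS]mx11_scalar ctrE. Qed.

Lemma sample_cov_mul : C *m w = N%:R^-1 *: \sum_(n < N) x n *m (shat w x n)^*%:M.
Proof.
rewrite /C /sample_cov -scalemxAl mulmx_suml; congr (_ *: _).
by apply: eq_bigr => n _; rewrite -mulmxA ctr_sample_mul_shat.
Qed.

Lemma quad_sample_cov : q = N%:R^-1 * \sum_(n < N) `|shat w x n| ^+ 2.
Proof.
rewrite /q -mulmxA sample_cov_mul -scalemxAr mxE mulmx_sumr summxE.
congr (_ * _); apply: eq_bigr => n _.
by rewrite mulmxA mul_mx_scalar mxE -/(shat w x n) mulrC normCK.
Qed.

Lemma quad_sample_cov_conj : Num.conj q = q.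
Proof. by rewrite /q -ctrE !ctrM ctrK ctr_sample_cov mulmxA. Qed.

Lemma quad_sample_cov_neq0 : C \in unitmx -> w != 0 -> q != 0.
Proof.
move=> C_unit; apply: contra_neq => q0.
suff Cw0 : C *m w = 0 by rewrite -(mulKmx C_unit w) Cw0 mulmx0.
move: q0; rewrite quad_sample_cov => /eqP; rewrite mulf_eq0 invr_eq0.
case/orP => [/eqP N0|/eqP s0]; first by rewrite sample_cov_mul N0 invr0 scale0r.
rewrite sample_cov_mul big1 ?scaler0 // => n _.
have /eqP := psumr_eq0P (fun n _ => exprn_ge0 2 (normr_ge0 (shat w x n))) s0 (i := n) isT.
by rewrite expf_eq0 /= normr_eq0 => /eqP ->; rewrite conjC0 raddf0 mulmx0.
Qed.

Lemma sigmahat_sqr : sigmahat w x ^+ 2 = q.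
Proof. exact: sqrtCK. Qed.

Lemma avecE : avec w x = q^-1 *: (C *m w).
Proof. by rewrite /avec sigmahat_sqr. Qed.

Lemma ctr_avec : ctr (avec w x) = q^-1 *: (ctr w *m C).
Proof.
by rewrite avecE ctrZ fmorphV /= quad_sample_cov_conj ctrM ctr_sample_cov.
Qed.

Lemma Mlam_rank1_downdate lam :
  Mlam w x lam = q^-1 *: C - (lam%:C)%C *: ((q^-1 *: (C *m w)) *m (q^-1 *: (ctr w *m C))).
Proof. by rewrite /Mlam sigmahat_sqr ctr_avec avecE. Qed.

Lemma ctr_mul_gradhat phi : q != 0 -> nuhat phi w x != 0 -> ctr w *m gradhat phi w x = 0.
Proof.
move=> q_neq0 nu_neq0.
have wS : ctr w *m Ehat (fun n => phi (shat w x n / sigmahat w x) *: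
                                  ((sigmahat w x)^-1 *: x n)) = (nuhat phi w x)%:M.
  rewrite /Ehat /nuhat -scalemxAr mulmx_sumr -scale_scalar_mx (raddf_sum (@scalar_mx _ 1)).
  congr (_ *: _); apply: eq_bigr => n _.
  rewrite -!scalemxAr [ctr w *m x n]mx11_scalar !scale_scalar_mx.
  by rewrite [_ / sigmahat w x]mulrC.
have wa : ctr w *m avec w x = 1%:M.
  by rewrite avecE -scalemxAr mulmxA [_ *m w]mx11_scalar scale_scalar_mx mulVf.
by rewrite mulmxBr wa -scalemxAr wS scale_scalar_mx mulVf // subrr.
Qed.

End SampleQuadraticForm.

Theorem proposition2 (R : realType) (d N : nat) (x : 'I_N -> 'cV[R[i]]_d)
  (phi : R[i] -> R[i]) (w : 'cV[R[i]]_d) :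
  sample_cov x \in unitmx ->
  w != 0 ->
  nuhat phi w x != 0 ->
  (forall lam : R, lam != 1 -> Mlam w x lam \in unitmx) /\
  cvg_to_at1 (fun lam : R => invmx (Mlam w x lam) *m gradhat phi w x)
     ((sigmahat w x ^+ 2) *: (invmx (sample_cov x) *m gradhat phi w x)).
Proof.
move=> C_unit w_neq0 nu_neq0.
have q_neq0 := quad_sample_cov_neq0 C_unit w_neq0.
have hCw : ctr w *m sample_cov x *m w = ((ctr w *m sample_cov x *m w) 0 0)%:M.
  exact: mx11_scalar.
have lam_neq1 lam : lam != 1 -> (lam%:C)%C != 1 by apply: contra_neq => -[].
split=> [lam /lam_neq1 l_neq1|].
  by rewrite Mlam_rank1_downdate (rank1_downdate_unit C_unit hCw q_neq0 l_neq1).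
apply: cvg_near_cst; near=> lam.
have /lam_neq1 l_neq1 : lam != 1 by near: lam; exists 1%R => //= y _; apply.
rewrite Mlam_rank1_downdate (invmx_rank1_downdate_mul_orth C_unit hCw q_neq0 l_neq1).
  by rewrite sigmahat_sqr.
exact: ctr_mul_gradhat.
Unshelve. all: by end_near.
Qed.
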